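(* Let $n\ge1$ and consider the block decomposition $\{X_j\}_{j\le n}$ of $\mathbb R^n$ with the metric $d_1$. Then for every nonempty $J\subseteq\{0,1,\dots,n\}$ and every $R>0$, $$\bigcap_{j\in J}N_1(X_j,R)\subseteq N_1\Big(\bigcap_{j\in J}X_j,nR\Big);$$ in particular the block decomposition is coarsely excisive for $d_1$.
   Context: $d_1(x,y)=\sum_{j<n}|x_j-y_j|$ on $\mathbb R^n$ and $N_1(Y,R)=\{x:\inf_{y\in Y}d_1(x,y)\le R\}$. The block decomposition of $\mathbb R^n$ consists of the $n+1$ sets $X_0=(-\infty,0]\times\mathbb R^{n-1}$, $X_j=[0,\infty)^j\times(-\infty,0]\times\mathbb R^{n-j-1}$ for $0<j<n$, and $X_n=[0,\infty)^n$. *)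

From Stdlib Require Import Reals Lra Lia.
Open Scope R_scope.

(* A point of R^n is represented by its coordinate function nat -> R;
   only coordinates j < n are relevant (all definitions below ignore
   coordinates j >= n). *)
Definition pt := nat -> R.

Fixpoint d1 (n : nat) (x y : pt) : R :=
  match n with
  | O => 0
  | S m => d1 m x y + Rabs (x m - y m)
  end.

(* N_1(Y,R) = { x : inf_{y in Y} d_1(x,y) <= R }, with inf of the empty set = +oo.
   inf_{y in Y} d1 x y <= R  unfolds to: for every eps > 0 there is y in Y
   with d1 x y < R + eps. *)
Definition N1 (n : nat) (Y : pt -> Prop) (r : R) (x : pt) : Prop :=
  forall eps : R, 0 < eps -> exists y : pt, Y y /\ d1 n x y < r + eps.

(* Block decomposition of R^n:
   X_0 = (-oo,0] x R^{n-1},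
   X_j = [0,oo)^j x (-oo,0] x R^{n-j-1}  (0 < j < n),
   X_n = [0,oo)^n.
   Uniformly: X_j = { x : x_i >= 0 for i < j, and x_j <= 0 if j < n }. *)
Definition block (n j : nat) (x : pt) : Prop :=
  (forall i : nat, (i < j)%nat -> 0 <= x i) /\ ((j < n)%nat -> x j <= 0).

From Pilot Require Import Defs.
From Stdlib Require Import Reals Lra Lia ClassicalEpsilon.
Open Scope R_scope.

(* [Reals] exports its own [d1] (on differentials), which shadows ours. *)
Local Notation d1 := Pilot.Defs.d1.

(* A point x lying within r of every block X_j, j in J, is moved onto the
   intersection coordinatewise: x_i is raised to 0 if some block of J forces
   x_i >= 0 (i < j in J), and lowered to 0 if a block forces x_i <= 0 (i in J).
   Proximity to those blocks bounds the size of each such move by r, so the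
   moved point lies in every block of J at d_1-distance at most n r. *)

Lemma d1_nonneg (n : nat) (x y : pt) : 0 <= d1 n x y.
Proof.
  induction n as [|n IH]; simpl; [lra|].
  pose proof (Rabs_pos (x n - y n)); lra.
Qed.

Lemma Rabs_coord_le_d1 (n i : nat) (x y : pt) :
  (i < n)%nat -> Rabs (x i - y i) <= d1 n x y.
Proof.
  induction n as [|n IH]; intros Hi; simpl; [lia|].
  pose proof (Rabs_pos (x n - y n)); pose proof (d1_nonneg n x y).
  destruct (Nat.eq_dec i n) as [->|Hne]; [lra|].
  specialize (IH ltac:(lia)); lra.
Qed.

Lemma d1_le_mul (n : nat) (x y : pt) (r : R) :
  (forall i, (i < n)%nat -> Rabs (x i - y i) <= r) -> d1 n x y <= INR n * r.
Proof.
  induction n as [|n IH]; intros Hcoord; [simpl; lra|].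
  rewrite S_INR; simpl.
  specialize (IH (fun i Hi => Hcoord i ltac:(lia))).
  specialize (Hcoord n ltac:(lia)); lra.
Qed.

Lemma N1_coord_lower (n i : nat) (Y : pt -> Prop) (r : R) (x : pt) :
  (i < n)%nat -> (forall y, Y y -> 0 <= y i) -> N1 n Y r x -> - r <= x i.
Proof.
  intros Hi HY HN.
  enough (- x i <= r) by lra.
  apply le_epsilon; intros eps Heps.
  destruct (HN eps Heps) as [y [Yy Hd]].
  pose proof (Rabs_coord_le_d1 n i x y Hi).
  pose proof (Rle_abs (- (x i - y i))) as Hneg; rewrite Rabs_Ropp in Hneg.
  pose proof (HY y Yy); lra.
Qed.

Lemma N1_coord_upper (n i : nat) (Y : pt -> Prop) (r : R) (x : pt) :
  (i < n)%nat -> (forall y, Y y -> y i <= 0) -> N1 n Y r x -> x i <= r.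
Proof.
  intros Hi HY HN.
  apply le_epsilon; intros eps Heps.
  destruct (HN eps Heps) as [y [Yy Hd]].
  pose proof (Rabs_coord_le_d1 n i x y Hi).
  pose proof (Rle_abs (x i - y i)); pose proof (HY y Yy); lra.
Qed.

Definition clamp (lower upper : Prop) (a : R) : R :=
  let a' := if excluded_middle_informative lower then Rmax a 0 else a in
  if excluded_middle_informative upper then Rmin a' 0 else a'.

Lemma clamp_ge0 (lower upper : Prop) (a : R) : lower -> 0 <= clamp lower upper a.
Proof.
  intros Hl; unfold clamp.
  destruct (excluded_middle_informative lower) as [_|]; [|contradiction].
  pose proof (Rmax_r a 0).
  destruct (excluded_middle_informative upper); [|lra].
  unfold Rmin; destruct Rle_dec; lra.
Qed.

Lemma clamp_le0 (lower upper : Prop) (a : R) : upper -> clamp lower upper a <= 0.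
Proof.
  intros Hu; unfold clamp.
  destruct (excluded_middle_informative upper) as [_|]; [apply Rmin_r|contradiction].
Qed.

Lemma Rabs_sub_clamp_le (lower upper : Prop) (a r : R) :
  0 <= r -> (lower -> - r <= a) -> (upper -> a <= r) ->
  Rabs (a - clamp lower upper a) <= r.
Proof.
  intros Hr Hl Hu; unfold clamp.
  destruct (excluded_middle_informative lower) as [L|L];
  destruct (excluded_middle_informative upper) as [U|U];
  try specialize (Hl L); try specialize (Hu U);
  apply Rabs_le; unfold Rmax, Rmin;
  repeat destruct Rle_dec; lra.
Qed.

Theorem proposition5p6p17 :
  forall (n : nat), (1 <= n)%nat ->
  forall (J : nat -> Prop),
    (forall j, J j -> (j <= n)%nat) ->
    (exists j, J j) ->
  forall (r : R), 0 < r ->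
  forall x : pt,
    (forall j, J j -> N1 n (block n j) r x) ->
    N1 n (fun y => forall j, J j -> block n j y) (INR n * r) x.
Proof.
  intros n _ J _ _ r Hr x HN eps Heps.
  set (lower i := exists j, J j /\ (i < j)%nat).
  set (y i := clamp (lower i) (J i) (x i)).
  exists y; split.
  - intros j Jj; split.
    + intros i Hi; apply clamp_ge0; exists j; auto.
    + intros _; apply clamp_le0; exact Jj.
  - enough (d1 n x y <= INR n * r) by lra.
    apply d1_le_mul; intros i Hi.
    apply Rabs_sub_clamp_le; [lra| |].
    + intros [j [Jj Hij]].
      apply (N1_coord_lower n i (block n j) r x Hi); [|exact (HN j Jj)].
      intros z [Hz _]; exact (Hz i Hij).
    + intros Ji.
      apply (N1_coord_upper n i (block n i) r x Hi); [|exact (HN i Ji)].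
      intros z [_ Hz]; exact (Hz Hi).
Qed.
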